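(* Let $G$ be a compact group and $V$ a finite-dimensional unitary complex representation with $V\cong\bigoplus_{\ell=1}^L V_\ell^{\oplus R_\ell}$, where the $V_\ell$ are pairwise non-isomorphic irreducible representations with $\dim V_\ell=N_\ell$. Represent each $f\in V$ by an $L$-tuple $(A_1,\ldots,A_L)$ of complex $N_\ell\times R_\ell$ matrices (the $i$-th column of $A_\ell$ being the coordinates, in a fixed orthonormal basis of $V_\ell$, of the component of $f$ in the $i$-th copy of $V_\ell$), and let $H=\prod_{\ell=1}^L U(N_\ell)$ act by $(U_\ell)_\ell\cdot(A_\ell)_\ell=(U_\ell A_\ell)_\ell$. Let $\mathcal L_f$ denote the complex linear span of the orbit $H\cdot f$. Then $$\dim_{\mathbb C}\mathcal L_f=\sum_{\ell=1}^L(\operatorname{rank}A_\ell)\,N_\ell,$$ and in particular $\dim_{\mathbb C}\mathcal L_f\le\sum_{\ell=1}^L\min(N_\ell R_\ell,N_\ell^2)$.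
   Context: $\mathcal L_f=\{\sum_i a_i(h_i\cdot f): a_i\in\mathbb C,\ h_i\in H\}$ is the smallest complex linear subspace of $V$ containing $H\cdot f$. *)

From Stdlib Require List.
From mathcomp Require Import all_boot all_algebra.
From mathcomp Require Import complex.
From mathcomp Require Import reals.

Set Implicit Arguments.
Unset Strict Implicit.
Unset Printing Implicit Defensive.

Import GRing.Theory Num.Theory.
Local Open Scope ring_scope.

Section MxTuples.
Variables (C : numClosedFieldType) (L : nat) (N Rk : 'I_L -> nat).

Definition mxtuple := forall l : 'I_L, 'M[C]_(N l, Rk l).

Definition Htuple := forall l : 'I_L, 'M[C]_(N l).

Definition unitary_mx n (U : 'M[C]_n) : bool :=
  U *m (map_mx Num.conj U)^T == 1%:M.

Definition inH (U : Htuple) : Prop := forall l, unitary_mx (U l).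

Definition Hact (U : Htuple) (A : mxtuple) : mxtuple := fun l => U l *m A l.

Definition coordT := {l : 'I_L & ('I_(N l) * 'I_(Rk l))%type}.
Definition Vspace := {ffun coordT -> C^o}.

Definition enc (A : mxtuple) : Vspace :=
  [ffun t => A (tag t) (tagged t).1 (tagged t).2].

Definition Lspan (A : mxtuple) (v : Vspace) : Prop :=
  exists s : seq (C * Htuple),
    (forall p : C * Htuple, Stdlib.Lists.List.In p s -> inH p.2) /\
    v = \sum_(p <- s) p.1 *: enc (Hact p.2 A).

End MxTuples.

(* L_f is the space S of tuples (B_l)_l whose every block B_l has its rows in
   the row space of A_l.  Each h . f = (U_l A_l)_l lies in S, whence L_f <= S.
   Conversely unitary matrices span all square matrices, and the orbit points
   for U and for -U on one block (the identity elsewhere) isolate that block,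
   so every (0, .., M A_l, .., 0) lies in L_f, and these span S.  A basis of
   S is obtained from bases of the row spaces of the A_l, so
   dim S = sum_l rank(A_l) N_l. *)
From HB Require Import structures.
From Stdlib Require List.
From mathcomp Require Import all_boot all_algebra.
From mathcomp Require Import complex.
From mathcomp Require Import reals.
From mathcomp Require Import fingroup perm ring.
Import GRing.Theory Num.Theory.
Local Open Scope ring_scope.
Set Implicit Arguments.
Unset Strict Implicit.

Section UnitarySpan.
Variables (C : numClosedFieldType) (n : nat).
Implicit Types U V : 'M[C]_n.

Lemma unitary_mx1 : unitary_mx (1%:M : 'M[C]_n).
Proof. by rewrite /unitary_mx map_mx1 trmx1 mul1mx. Qed.

Lemma unitary_mxN U : unitary_mx U -> unitary_mx (- U).
Proof. by rewrite /unitary_mx map_mxN linearN /= mulNmx mulmxN opprK. Qed.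

Lemma unitary_mxM U V : unitary_mx U -> unitary_mx V -> unitary_mx (U *m V).
Proof.
rewrite /unitary_mx map_mxM trmx_mul => /eqP hU /eqP hV.
by rewrite mulmxA -(mulmxA U) hV mulmx1 hU.
Qed.

Lemma unitary_perm_mx (s : 'S_n) : unitary_mx (perm_mx s : 'M[C]_n).
Proof. by rewrite /unitary_mx map_perm_mx tr_perm_mx -perm_mxM mulgV perm_mx1. Qed.

Definition reflection_mx (j : 'I_n) : 'M[C]_n := 1%:M - 2%:R *: delta_mx j j.

Lemma unitary_reflection_mx j : unitary_mx (reflection_mx j).
Proof.
have conj_refl : map_mx Num.conj (reflection_mx j) = reflection_mx j.
  by rewrite map_mxB map_mxZ map_mx1 map_delta_mx rmorph_nat.
have tr_refl : (reflection_mx j)^T = reflection_mx j.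
  by rewrite linearB /= trmx1 linearZ /= trmx_delta.
rewrite /unitary_mx conj_refl tr_refl /reflection_mx mulmxBl !mulmxBr !mul1mx.
rewrite mulmx1 -!scalemxAl -scalemxAr mul_delta_mx scalerA.
apply/eqP; rewrite -scalerBl -addrA -scaleNr -scalerBl.
by rewrite (_ : - 2 - (2 - 2 * 2) = 0 :> C) ?scale0r ?addr0 //; ring.
Qed.

Lemma delta_mx_unitary_comb (i j : 'I_n) :
  let P := perm_mx (tperm i j) : 'M[C]_n in
  delta_mx i j = 2%:R^-1 *: P - 2%:R^-1 *: (P *m reflection_mx j).
Proof.
move=> P; have P_delta : P *m delta_mx j j = delta_mx i j.
  rewrite -row_permE; apply/matrixP => a b; rewrite !mxE.
  congr ((_ && _ : bool)%:R); apply/eqP/eqP => [Pa|->]; last by rewrite tpermL.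
  by apply: (@perm_inj _ (tperm i j)); rewrite Pa tpermL.
rewrite /reflection_mx mulmxBr mulmx1 -scalemxAr P_delta -scalerBr opprB.
by rewrite addrC subrK scalerA mulVf ?scale1r ?pnatr_eq0.
Qed.

Lemma unitary_span_ind (P : 'M[C]_n -> Prop) :
  P 0 -> (forall U V, P U -> P V -> P (U + V)) -> (forall c U, P U -> P (c *: U)) ->
  (forall U, unitary_mx U -> P U) -> forall M, P M.
Proof.
move=> P0 PD PZ Punit M; rewrite [M]matrix_sum_delta.
elim/big_ind: _ => // i _; elim/big_ind: _ => // j _.
apply: (PZ); rewrite delta_mx_unitary_comb -scaleNr.
apply: PD; apply: (PZ); apply: Punit; first exact: unitary_perm_mx.
exact: unitary_mxM (unitary_perm_mx _) (unitary_reflection_mx _).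
Qed.

End UnitarySpan.

Section OrbitSpan.
Variables (C : numClosedFieldType) (L : nat) (N Rk : 'I_L -> nat).
Variable A : mxtuple C N Rk.

Lemma Lspan0 : Lspan A 0.
Proof. by exists [::]; split => //; rewrite big_nil. Qed.

Lemma LspanD v w : Lspan A v -> Lspan A w -> Lspan A (v + w).
Proof.
move=> [s1 [H1 ->]] [s2 [H2 ->]]; exists (s1 ++ s2); split; last by rewrite big_cat.
by move=> p /(List.in_app_or s1 s2) [/H1|/H2].
Qed.

Lemma LspanZ c v : Lspan A v -> Lspan A (c *: v).
Proof.
move=> [s [H ->]]; exists [seq (c * p.1, p.2) | p <- s]; split.
  by move=> p /List.in_map_iff [q [<- /H]].
by rewrite big_map scaler_sumr; apply: eq_bigr => p _; rewrite scalerA.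
Qed.

Lemma eq_enc (B B' : mxtuple C N Rk) : (forall l, B l = B' l) -> enc B = enc B'.
Proof. by move=> eqB; apply/ffunP => -[l [i j]]; rewrite !ffunE /= eqB. Qed.

Lemma enc_inj (B B' : mxtuple C N Rk) : enc B = enc B' -> forall l, B l = B' l.
Proof.
move=> eqB l; apply/matrixP => i j.
by have /ffunP/(_ (Tagged (fun k => ('I_(N k) * 'I_(Rk k))%type) (i, j))) := eqB;
  rewrite !ffunE.
Qed.

Definition block_enc l (M : 'M[C]_(N l, Rk l)) : Vspace C N Rk :=
  enc (dfwith (fun k => 0 : 'M[C]_(N k, Rk k)) M).

Lemma block_enc_is_linear l : linear (@block_enc l).
Proof.
move=> c M M'; apply/ffunP => -[k [i j]]; rewrite !ffunE /=.
case: (eqVneq l k) => [l_eq_k|lk]; first by subst k; rewrite !dfwith_in !mxE.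
by rewrite !dfwith_out // !mxE scaler0 addr0.
Qed.

HB.instance Definition _ l :=
  GRing.isLinear.Build C _ _ *:%R (@block_enc l) (@block_enc_is_linear l).

Lemma enc_sum_block_enc (B : mxtuple C N Rk) : enc B = \sum_l block_enc (B l).
Proof.
apply/ffunP => -[k [i j]]; rewrite sum_ffunE (bigD1 k) //= big1 ?addr0.
  by rewrite !ffunE /= dfwith_in.
by move=> l lk; rewrite !ffunE /= dfwith_out // mxE.
Qed.

Definition unitary_on_block l (U : 'M[C]_(N l)) : Htuple C N :=
  dfwith (fun k => 1%:M : 'M[C]_(N k)) U.

Lemma inH_unitary_on_block l U : unitary_mx U -> inH (@unitary_on_block l U).
Proof.
by move=> hU k; rewrite /unitary_on_block; case: dfwithP => // k' _; apply: unitary_mx1.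
Qed.

(* Half the difference of the orbit points for U and -U on block l. *)
Lemma Lspan_block_unitary l (U : 'M[C]_(N l)) :
  unitary_mx U -> Lspan A (block_enc (U *m A l)).
Proof.
move=> hU; exists [:: (2%:R^-1, unitary_on_block U); (- 2%:R^-1, unitary_on_block (- U))].
split.
  by move=> p [<-|[<-|[]]]; apply: inH_unitary_on_block => //; exact: unitary_mxN.
rewrite !big_cons big_nil addr0; apply/ffunP => -[k [i j]]; rewrite !ffunE /= /Hact.
case: (eqVneq l k) => [l_eq_k|lk]; last first.
  by rewrite /unitary_on_block !dfwith_out // mxE -scalerDl subrr scale0r.
subst k; rewrite /unitary_on_block !dfwith_in mulNmx !mxE scaleNr scalerN opprK -scalerDl.
by rewrite (_ : 2%:R^-1 + 2%:R^-1 = 1 :> C) ?scale1r //; field.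
Qed.

Lemma Lspan_block_submx l (M : 'M[C]_(N l, Rk l)) :
  (M <= A l)%MS -> Lspan A (block_enc M).
Proof.
move/mulmxKpV <-; elim/unitary_span_ind: (M *m pinvmx (A l)).
- by rewrite mul0mx linear0; apply: Lspan0.
- by move=> U V LU LV; rewrite mulmxDl linearD; apply: LspanD.
- by move=> c U LU; rewrite -scalemxAl linearZ; apply: LspanZ.
- exact: Lspan_block_unitary.
Qed.

Lemma Lspan_enc_submx (B : mxtuple C N Rk) :
  (forall l, B l <= A l)%MS -> Lspan A (enc B).
Proof.
move=> sBA; rewrite enc_sum_block_enc.
elim/big_ind: _ => [|v w|l _]; first exact: Lspan0; first exact: LspanD.
exact: Lspan_block_submx.
Qed.

Definition coef_index := {l : 'I_L & ('I_(N l) * 'I_(\rank (A l)))%type}.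
Definition coef_space := {ffun coef_index -> C^o}.

Definition coef_block (x : coef_space) l : 'M[C]_(N l, \rank (A l)) :=
  \matrix_(i, j) x (Tagged (fun k => ('I_(N k) * 'I_(\rank (A k)))%type) (i, j)).

Definition row_space_enc (x : coef_space) : Vspace C N Rk :=
  enc (fun l => coef_block x l *m row_base (A l)).

Lemma row_space_enc_is_linear : linear row_space_enc.
Proof.
move=> c x y; apply/ffunP => -[k [a b]]; rewrite !ffunE /=.
have -> : coef_block (c *: x + y) k = c *: coef_block x k + coef_block y k.
  by apply/matrixP => i j; rewrite !mxE !ffunE.
by rewrite mulmxDl -scalemxAl !mxE.
Qed.

HB.instance Definition _ :=
  GRing.isLinear.Build C _ _ *:%R row_space_enc row_space_enc_is_linear.

Lemma row_space_enc_inj : injective row_space_enc.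
Proof.
move=> x y /enc_inj eqxy; apply/ffunP => -[k [i j]].
have := row_free_inj (row_base_free (A k)) (eqxy k) => /matrixP/(_ i j).
by rewrite !mxE.
Qed.

Definition row_space_tuples : {vspace Vspace C N Rk} := limg (linfun row_space_enc).

Lemma row_space_tuplesP v :
  reflect (exists2 B : mxtuple C N Rk, (forall l, B l <= A l)%MS & v = enc B)
          (v \in row_space_tuples).
Proof.
apply: (iffP memv_imgP) => [[x _ ->]|[B sBA ->]].
  exists (fun l => coef_block x l *m row_base (A l)); last by rewrite lfunE.
  by move=> l; rewrite (submx_trans (submxMl _ _)) ?eq_row_base.
exists [ffun t : coef_index =>
          (B (tag t) *m pinvmx (row_base (A (tag t)))) (tagged t).1 (tagged t).2];
  rewrite ?memvf // lfunE; apply: eq_enc => l.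
rewrite (_ : coef_block _ l = B l *m pinvmx (row_base (A l))).
  by rewrite mulmxKpV // eq_row_base.
by apply/matrixP => i j; rewrite mxE ffunE.
Qed.

Lemma dim_row_space_tuples :
  \dim row_space_tuples = (\sum_(l < L) \rank (A l) * N l)%N.
Proof.
have /lker0P/eqP ker0 : injective (linfun row_space_enc).
  by move=> x y; rewrite !lfunE; apply: row_space_enc_inj.
rewrite limg_dim_eq ?ker0 ?capv0 // dimvf /dim /= muln1 card_tagged sumnE.
by rewrite big_map big_enum; apply: eq_bigr => l _; rewrite card_prod !card_ord mulnC.
Qed.

Lemma row_space_tuples_Lspan v : v \in row_space_tuples <-> Lspan A v.
Proof.
split=> [/row_space_tuplesP[B sBA ->]|[s [_ ->]]]; first exact: Lspan_enc_submx.
apply: rpred_sum => p _; apply/rpredZ/row_space_tuplesP.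
by exists (Hact p.2 A) => // l; apply: submxMl.
Qed.

End OrbitSpan.

Theorem proposition3p5 (R : realType) (L : nat) (N Rk : 'I_L -> nat)
    (A : mxtuple R[i] N Rk) :
  exists Lf : {vspace Vspace R[i] N Rk},
    (forall v, v \in Lf <-> Lspan A v) /\
    (\dim Lf = \sum_(l < L) \rank (A l) * N l)%N /\
    (\dim Lf <= \sum_(l < L) minn (N l * Rk l) (N l * N l))%N.
Proof.
exists (row_space_tuples A); split; first exact: row_space_tuples_Lspan.
rewrite dim_row_space_tuples; split=> //; apply: leq_sum => l _.
by rewrite leq_min mulnC !leq_mul2l rank_leq_col rank_leq_row !orbT.
Qed.
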